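(* Let $n\ge2$, $d\ge1$, $r\ge3$ with $n\ge d$ and $dr\equiv0\pmod n$. (1) If $dr=n$, then $\mathrm{diam}(Q_n(d,r))=n+r$ when $r=3$, and $\mathrm{diam}(Q_n(d,r))=n+\lfloor 3r/2\rfloor-2$ when $r\ge4$. (2) If $dr\ge 2n$, then $\mathrm{diam}(Q_n(d,r))=n+\max\{\lfloor r/2\rfloor,\,2\lceil n/d\rceil-2\}$.
   Context: $\mathbb{Z}_2^n=\{0,1\}^n$ with coordinatewise addition mod 2; $e_i$ is the $i$-th standard basis vector, subscripts read modulo $n$. The recursive cube of rings $Q_n(d,r)$ (for $n\ge d$, $dr\equiv0\pmod n$) is the simple graph on $\mathbb{Z}_2^n\times\mathbb{Z}_r$ in which $(a,x)$ is adjacent to $(a+e_{i+dx},x)$ for $1\le i\le d$ and to $(a,x\pm1)$. *)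

From mathcomp Require Import all_boot.
Set Implicit Arguments. Unset Strict Implicit. Unset Printing Implicit Defensive.

Definition step (T : finType) (e : rel T) (S : {set T}) : {set T} :=
  [set y | [exists x in S, e x y]].

Definition walkb (T : finType) (e : rel T) (k : nat) (u v : T) : bool :=
  v \in iter k (step e) [set u].

(* graph distance: least k such that a walk of length k from u to v exists
   (searching k < #|T|, which suffices for connected graphs; returns #|T|
   if v is unreachable from u) *)
Definition gdist (T : finType) (e : rel T) (u v : T) : nat :=
  find (fun k => walkb e k u v) (iota 0 #|T|).

Definition diam (T : finType) (e : rel T) : nat :=
  \max_(u : T) \max_(v : T) gdist e u v.

(* vertices: Z_2^n x Z_r, with coordinates of Z_2^n indexed by 'I_n
   (coordinate label k in 1..n is stored at index k-1, i.e. labels mod n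
   become indices mod n shifted by one) and Z_r represented by 'I_r *)
Definition QV (n r : nat) : finType := ({ffun 'I_n -> bool} * 'I_r)%type.

Definition flip (n : nat) (a : {ffun 'I_n -> bool}) (k : nat) : {ffun 'I_n -> bool} :=
  [ffun j : 'I_n => a j (+) (val j == k %% n)].

(* adjacency of Q_n(d,r):
   (a,x) ~ (a + e_{i+dx}, x) for 1 <= i <= d  (0-indexed: index i' + d x, i' < d)
   (a,x) ~ (a, x +- 1 mod r) *)
Definition Qadj (n d r : nat) : rel (QV n r) :=
  fun u v =>
    ((val u.2 == val v.2) && [exists i : 'I_d, v.1 == flip u.1 (i + d * u.2)])
    || ((u.1 == v.1) &&
        ((val v.2 == (u.2 + 1) %% r) || (val u.2 == (v.2 + 1) %% r))).

Definition ceil_div (m k : nat) : nat := (m + k - 1) %/ k.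
Arguments diam {T} e.
Arguments Qadj n d r : clear implicits.

(* Q_n(d,r) changes coordinate j of the Z_2^n-word only at the layers x whose window
   {i + d x : 1 <= i <= d} (mod n) contains j; since n divides d r, the windows of
   consecutive layers follow each other cyclically, so any ceil(n/d) consecutive layers
   (r layers when d r = n) cover every coordinate.  Upper bound: walk a few ring steps
   one way, then sweep such a block of layers in the other direction, fixing every
   mismatched coordinate on the way.  Lower bound: a walk from the all-0 word on layer 0
   to the all-1 word on layer 0 or r/2 makes n cube steps, and its ring steps, seen on
   the unwrapped line, visit a block of layers covering all coordinates and end at the
   right residue; an elementary count of such ring walks gives the other summand. *)

From mathcomp Require Import all_boot zify.

Set Implicit Arguments. Unset Strict Implicit. Unset Printing Implicit Defensive.

Section Walks.

Variables (T : finType) (e : rel T).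

Lemma walkb0 u : walkb e 0 u u.
Proof. by rewrite /walkb /= set11. Qed.

Lemma walkbS k u w v : walkb e k u w -> e w v -> walkb e k.+1 u v.
Proof. by move=> uw wv; rewrite /walkb /= /step inE; apply/existsP; exists w; apply/andP. Qed.

Lemma walkbSP k u v : walkb e k.+1 u v -> exists2 w, walkb e k u w & e w v.
Proof. by rewrite /walkb /= /step inE => /existsP [w /andP []]; exists w. Qed.

Lemma walkb_cat k l u w v : walkb e k u w -> walkb e l w v -> walkb e (k + l) u v.
Proof.
move=> uw; elim: l v => [|l IHl] v; first by rewrite /walkb inE addn0 => /eqP ->.
by case/walkbSP=> w' /IHl uw' w'v; rewrite addnS; apply: walkbS uw' w'v.
Qed.

Lemma walkb_sym : symmetric e -> forall k u v, walkb e k u v -> walkb e k v u.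
Proof.
move=> e_sym; elim=> [|k IHk] u v; first by rewrite /walkb inE => /eqP ->; apply: walkb0.
case/walkbSP=> w /IHk wu wv; rewrite -add1n; apply: walkb_cat wu.
by apply: walkbS (walkb0 v) _; rewrite e_sym.
Qed.

Definition reach m u v := exists2 k, k <= m & walkb e k u v.

Lemma reach_edge u v : e u v -> reach 1 u v.
Proof. by exists 1 => //; apply: walkbS (walkb0 u) _. Qed.

Lemma reach_cat m l u w v : reach m u w -> reach l w v -> reach (m + l) u v.
Proof.
by move=> [k km uw] [k' k'l wv]; exists (k + k'); [apply: leq_add | apply: walkb_cat uw wv].
Qed.

Lemma reach_leq m m' u v : m <= m' -> reach m u v -> reach m' u v.
Proof. by move=> mm' [k km uv]; exists k => //; apply: leq_trans mm'. Qed.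

Lemma reach_sym m u v : symmetric e -> reach m u v -> reach m v u.
Proof. by move=> e_sym [k km uv]; exists k => //; apply: walkb_sym. Qed.

Lemma gdist_leq k u v : walkb e k u v -> k < #|T| -> gdist e u v <= k.
Proof.
move=> uv kT; rewrite /gdist; case: leqP => // lt_k.
by have := before_find 0 lt_k; rewrite nth_iota // add0n uv.
Qed.

Lemma gdist_geq D u v :
  D <= #|T| -> (forall k, walkb e k u v -> D <= k) -> D <= gdist e u v.
Proof.
move=> DT walk_long; rewrite /gdist; case: leqP => // lt_D.
have found : find (fun k => walkb e k u v) (iota 0 #|T|) < size (iota 0 #|T|).
  by rewrite size_iota; apply: leq_trans lt_D DT.
have := nth_find 0 (eqbRL (has_find _ _) found).
rewrite size_iota in found; rewrite nth_iota // add0n => /walk_long.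
by rewrite leqNgt lt_D.
Qed.

Lemma diam_leq D : D < #|T| -> (forall u v, reach D u v) -> diam e <= D.
Proof.
move=> DT reachD; apply/bigmax_leqP => u _; apply/bigmax_leqP => v _.
have [k kD uv] := reachD u v.
exact: leq_trans (gdist_leq uv (leq_ltn_trans kD DT)) kD.
Qed.

Lemma diam_geq D u v :
  D <= #|T| -> (forall k, walkb e k u v -> D <= k) -> D <= diam e.
Proof.
move=> DT walk_long; apply: leq_trans (gdist_geq DT walk_long) _.
by apply: leq_trans (leq_bigmax v) (leq_bigmax (F := fun u => \max_v gdist e u v) u).
Qed.

End Walks.

(* [tour p lo hi c]: fewest steps of a walk on the line from [p] to [c] visiting all of
   [[lo, hi]]. *)
Definition tour p lo hi c :=
  minn (p - lo + (hi - lo) + (hi - c)) (hi - p + (hi - lo) + (c - lo)).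

Lemma tour_extend_right p lo hi c : lo <= p <= hi -> lo <= c <= hi ->
  tour p lo (maxn hi c.+1) c.+1 <= (tour p lo hi c).+1.
Proof. rewrite /tour; lia. Qed.

Lemma tour_extend_left p lo hi c : lo <= p <= hi -> lo <= c <= hi ->
  tour p (minn lo c.-1) hi c.-1 <= (tour p lo hi c).+1.
Proof. rewrite /tour; lia. Qed.

Lemma residue_gap_cases r k c y : 0 < r -> c %% r = y -> exists q, c = q + y /\
  [\/ r * k + r <= q, q = r * k, q + r = r * k | q + 2 * r <= r * k].
Proof.
move=> r_gt0 cy; exists (c %/ r * r); split; first by rewrite {1}(divn_eq c r) cy.
rewrite [r * k]mulnC; move: (c %/ r) => q.
case: (ltngtP q k) => [lt_qk | lt_kq | ->]; last by constructor 2.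
  case: (ltngtP q.+1 k) => [lt_q1k | lt_kq1 | <-]; last by constructor 3; rewrite mulSnr.
    by constructor 4; rewrite mul2n -addnn addnA -!mulSnr leq_mul2r lt_q1k orbT.
  lia.
by constructor 1; rewrite -mulSnr leq_mul2r lt_kq orbT.
Qed.

Lemma tour_geq_same_residue r m k lo hi c : 0 < r ->
  lo <= r * k <= hi -> lo <= c <= hi -> c %% r = 0 -> m <= (hi - lo).+1 ->
  minn (2 * m - 2) r <= tour (r * k) lo hi c.
Proof.
move=> r_gt0 p_in c_in /(residue_gap_cases k r_gt0) [q [cq gap]] m_le; subst c.
rewrite /tour; case: gap; lia.
Qed.

Lemma tour_geq_half_residue r k lo hi c : 0 < r ->
  lo <= r * k <= hi -> lo <= c <= hi -> c %% r = r %/ 2 ->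
  r %/ 2 <= tour (r * k) lo hi c.
Proof.
move=> r_gt0 p_in c_in /(residue_gap_cases k r_gt0) [q [cq gap]]; subst c.
rewrite /tour; case: gap; lia.
Qed.

Lemma tour_geq_half_residue_full_turn r k lo hi c : 4 <= r ->
  lo <= r * k <= hi -> lo <= c <= hi -> c %% r = r %/ 2 -> r <= (hi - lo).+1 ->
  r + r %/ 2 - 2 <= tour (r * k) lo hi c.
Proof.
move=> r_ge4 p_in c_in /(residue_gap_cases k (leq_trans _ r_ge4)) [//|q [cq gap]] r_le; subst c.
rewrite /tour; case: gap; lia.
Qed.

Lemma ceil_div_leq n d k : 0 < d -> (ceil_div n d <= k) = (n <= k * d).
Proof.
move=> d_gt0; rewrite /ceil_div -ltnS ltn_divLR // mulSn.
by apply/idP/idP; lia.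
Qed.

Lemma ceil_divMl d k : 0 < d -> ceil_div (d * k) d = k.
Proof.
move=> d_gt0; rewrite /ceil_div -addnBA // mulnC divnMDl // divn_small ?addn0 //.
by rewrite ltn_subrL d_gt0.
Qed.

Lemma ceil_div_half n d r : 0 < d -> 2 * n <= d * r -> 2 * ceil_div n d <= r.+1.
Proof.
move=> d_gt0 dense; set h := r.+1 %/ 2.
have r_h : r <= 2 * h by rewrite /h; lia.
suff : ceil_div n d <= h by rewrite /h; lia.
rewrite ceil_div_leq // -(leq_pmul2l (isT : 0 < 2)).
by apply: leq_trans dense _; rewrite mulnA [d * r]mulnC leq_mul2r r_h orbT.
Qed.

Section RecursiveCube.

Variables n d r : nat.
Hypothesis r_gt0 : 0 < r.

Local Notation Q := (Qadj n d r).
Local Notation word := {ffun 'I_n -> bool}.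

Lemma flipK (a : word) k : flip (flip a k) k = a.
Proof. by apply/ffunP => j; rewrite !ffunE addbK. Qed.

Lemma Qadj_sym : symmetric Q.
Proof.
move=> [a x] [b y]; rewrite /Qadj /= [b == a]eq_sym [_ || (val x == _)]orbC.
rewrite [y == x :> nat]eq_sym.
case: eqP => [/val_inj <- | _] //=; congr (_ || _); apply: eq_existsb => i.
by apply/eqP/eqP => ->; rewrite flipK.
Qed.

(* Ring positions are unwrapped to naturals; [layer w] is the ring position [w mod r]. *)
Definition layer w : 'I_r := Ordinal (ltn_pmod w r_gt0).

Lemma layer_ord (x : 'I_r) : layer x = x.
Proof. by apply: val_inj; rewrite /= modn_small. Qed.

Lemma layerDr w : layer (w + r) = layer w.
Proof. by apply: val_inj; rewrite /= modnDr. Qed.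

Lemma Qadj_up (a : word) w : Q (a, layer w) (a, layer w.+1).
Proof. by rewrite /Qadj /= eqxx /= modnDml addn1 eqxx orbT. Qed.

Definition window (x : 'I_r) : {set 'I_n} :=
  [set j | [exists i : 'I_d, val j == (i + d * x) %% n]].

Definition cover lo hi : {set 'I_n} :=
  [set j | [exists t : 'I_hi.+1, (lo <= t) && (j \in window (layer t))]].

Lemma coverP lo hi j :
  reflect (exists2 t, lo <= t <= hi & j \in window (layer t)) (j \in cover lo hi).
Proof.
rewrite inE; apply: (iffP existsP) => [[t /andP [lo_t jt]] | [t /andP [lo_t t_hi] jt]].
  by exists t => //; rewrite lo_t -ltnS ltn_ord.
by exists (Ordinal (t_hi : t < hi.+1)); rewrite lo_t.
Qed.

Lemma cover_sub lo hi lo' hi' : lo' <= lo -> hi <= hi' -> cover lo hi \subset cover lo' hi'.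
Proof.
move=> lo_lo' hi_hi'; apply/subsetP => j /coverP [t t_in jt].
by apply/coverP; exists t => //; lia.
Qed.

Lemma cover_shift lo hi (S : {set 'I_n}) :
  S \subset cover lo hi -> S :\: window (layer lo) \subset cover lo.+1 hi.
Proof.
move=> sub; apply/subsetP => j /setDP [/(subsetP sub)/coverP [t /andP [lo_t t_hi] jt] j_lo].
apply/coverP; exists t => //; rewrite t_hi andbT ltn_neqAle lo_t andbT.
by apply: contraNneq j_lo => ->.
Qed.

Lemma cover_empty lo hi : hi < lo -> cover lo hi = set0.
Proof. by move=> hi_lo; apply/setP => j; rewrite in_set0; apply/coverP => -[t]; lia. Qed.

Definition flips (a : word) (S : {set 'I_n}) : word := [ffun j => a j (+) (j \in S)].

Definition mismatch (a b : word) : {set 'I_n} := [set j | a j != b j].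

Lemma mismatch_eq0 (a b : word) : (mismatch a b == set0) = (a == b).
Proof.
apply/eqP/eqP => [mm0 | ->]; last by apply/setP => j; rewrite !inE eqxx.
by apply/ffunP => j; have := in_set0 j; rewrite -mm0 inE => /negbFE/eqP.
Qed.

Lemma mismatch_card (a b : word) : #|mismatch a b| <= n.
Proof. by apply: leq_trans (max_card _) _; rewrite card_ord. Qed.

Lemma mismatch_flips (a b : word) V :
  mismatch (flips a (mismatch a b :&: V)) b = mismatch a b :\: V.
Proof.
apply/setP => j; rewrite !inE ffunE !inE.
by case: (a j); case: (b j); case: (j \in V).
Qed.

Lemma walkb_flips_window (x : 'I_r) (a : word) (S : {set 'I_n}) :
  S \subset window x -> walkb Q #|S| (a, x) (flips a S, x).
Proof.
move cardS: #|S| => k; elim: k S cardS => [|k IHk] S cardS sub.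
  have -> : S = set0 by apply/cards0_eq.
  have -> : flips a set0 = a by apply/ffunP => j; rewrite ffunE inE addbF.
  exact: walkb0.
have [j jS] : exists j, j \in S by apply/card_gt0P; rewrite cardS.
have cardSj : #|S :\ j| = k by move: (cardsD1 j S); rewrite jS cardS add1n => -[].
apply: walkbS (IHk _ cardSj (subset_trans (subsetDl S _) sub)) _.
have /[!inE] /existsP [i /eqP ji] := subsetP sub j jS.
rewrite /Qadj /= eqxx /=; apply/orP; left; apply/existsP; exists i.
apply/eqP/ffunP => j'; rewrite !ffunE -ji in_setD1.
have -> : (val j' == val j) = (j' == j) by [].
by case: (eqVneq j' j) => [->|]; rewrite ?jS /= ?addbF ?addbT.
Qed.

Lemma reach_fix_window (x : 'I_r) (a b : word) :
  exists2 a', reach Q #|mismatch a b :&: window x| (a, x) (a', x)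
            & mismatch a' b = mismatch a b :\: window x.
Proof.
exists (flips a (mismatch a b :&: window x)); last exact: mismatch_flips.
by exists #|mismatch a b :&: window x| => //; apply/walkb_flips_window/subsetIr.
Qed.

Lemma reach_sweep_cover s z (a b : word) :
  mismatch a b \subset cover z (z + s) ->
  reach Q (s + #|mismatch a b|) (a, layer z) (b, layer (z + s)).
Proof.
elim: s z a => [|s IHs] z a sub;
  have [a' fix_a' mm_a'] := reach_fix_window (layer z) a b;
  have := cover_shift sub; rewrite -mm_a' => sub';
  rewrite -(cardsID (window (layer z)) (mismatch a b)) -mm_a'.
  move: sub'; rewrite ?addn0 cover_empty // subset0 => /eqP mm0.
  have a'b : a' = b by apply/eqP; rewrite -mismatch_eq0 mm0.
  by rewrite mm0 cards0 add0n !addn0 -{2}a'b.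
rewrite -addSnnS in sub'; have := IHs _ _ sub'; rewrite -addSnnS => sweep.
have := reach_cat (reach_cat fix_a' (reach_edge (Qadj_up a' z))) sweep.
by apply: reach_leq; lia.
Qed.

Lemma reach_ring t z (a : word) : reach Q t (a, layer z) (a, layer (z + t)).
Proof.
have mm0 : mismatch a a = set0 by apply/eqP; rewrite mismatch_eq0.
by have := @reach_sweep_cover t z a a; rewrite mm0 cards0 addn0; apply; apply: sub0set.
Qed.

Lemma layer_offsets (x y : 'I_r) : x != y -> exists f g,
  [/\ layer (x + f) = y, layer (y + g) = x, f + g = r, 0 < f & 0 < g].
Proof.
move=> xy; have x_lt := ltn_ord x; have y_lt := ltn_ord y.
case: (ltngtP x y) => [x_y | y_x | /val_inj xy_eq]; last by rewrite xy_eq eqxx in xy.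
- exists (y - x), (x + r - y); split; try lia.
  + by rewrite subnKC ?layer_ord // ltnW.
  + by rewrite (_ : y + _ = x + r); [rewrite layerDr layer_ord | lia].
- exists (y + r - x), (x - y); split; try lia.
  + by rewrite (_ : x + _ = y + r); [rewrite layerDr layer_ord | lia].
  + by rewrite subnKC ?layer_ord // ltnW.
Qed.

Lemma reach_of_short_offsets D :
  (forall x (a b : word), reach Q D (a, x) (b, x)) ->
  (forall w f (a b : word), 0 < f -> f <= r %/ 2 -> reach Q D (a, layer w) (b, layer (w + f))) ->
  forall u v, reach Q D u v.
Proof.
move=> same_layer route [a x] [b y]; case: (eqVneq x y) => [<- | xy]; first exact: same_layer.
have [f [g [xf yg fg f_gt0 g_gt0]]] := layer_offsets xy.
case: (leqP f (r %/ 2)) => [f_half | f_half].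
  by have := route x f a b f_gt0 f_half; rewrite xf layer_ord.
apply: reach_sym Qadj_sym _.
by have := route y g b a g_gt0 (_ : g <= r %/ 2); rewrite yg layer_ord; apply; lia.
Qed.

Hypothesis n_gt0 : 0 < n.

Lemma cover_card lo hi : #|cover lo hi| <= (hi - lo).+1 * d.
Proof.
pose f (p : 'I_(hi - lo).+1 * 'I_d) : 'I_n :=
  Ordinal (ltn_pmod (p.2 + d * layer (lo + p.1)) n_gt0).
have sub : cover lo hi \subset f @: setT.
  apply/subsetP => j /coverP [t /andP [lo_t t_hi]] /[!inE] /existsP [i /eqP ji].
  have t_lt : t - lo < (hi - lo).+1 by lia.
  apply/imsetP; exists (Ordinal t_lt, i) => //; apply: val_inj; rewrite /= ji.
  by rewrite subnKC.
apply: leq_trans (subset_leq_card sub) _; apply: leq_trans (leq_imset_card _ _) _.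
by rewrite cardsT card_prod !card_ord.
Qed.

Lemma mismatch_flip (a b : word) k :
  mismatch a (flip b k) \subset Ordinal (ltn_pmod k n_gt0) |: mismatch a b.
Proof.
apply/subsetP => j; rewrite !inE ffunE.
have -> : (j == Ordinal (ltn_pmod k n_gt0)) = (val j == k %% n) by [].
by case: (val j == k %% n); rewrite ?addbF ?orbT.
Qed.

(* The start is unwrapped to some [p >= k], so that no position visited by the walk
   falls below 0. *)
Lemma walk_tour_invariant p k (a : word) v : k <= p -> walkb Q k (a, layer p) v ->
  exists lo hi c, [/\ [&& p <= lo + k, lo <= p <= hi & lo <= c <= hi], c %% r = v.2,
    mismatch a v.1 \subset cover lo hi & #|mismatch a v.1| + tour p lo hi c <= k].
Proof.
elim: k v => [|k IHk] v k_p.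
  rewrite /walkb inE => /eqP ->; exists p, p, p.
  have -> : mismatch a a = set0 by apply/eqP; rewrite mismatch_eq0.
  by rewrite /tour !subnn addn0 !leqnn sub0set cards0.
case/walkbSP=> -[b y] /(IHk _ (ltnW k_p)) [lo [hi [c [/and3P [p_lo p_in c_in] cy sub len]]]] /=.
rewrite /= in cy sub len.
case: v => b' y' /orP [/andP [/= /eqP yy' /existsP [i /eqP ->]] | /andP [/eqP <- /= ring]] /=.
- exists lo, hi, c; split; [by apply/and3P; split; lia | by rewrite cy; apply: yy' | |].
  + apply: subset_trans (mismatch_flip _ _ _) _; rewrite subUset sub andbT sub1set.
    apply/coverP; exists c => //; rewrite inE; apply/existsP; exists i.
    by rewrite (_ : layer c = y) //; apply: val_inj; rewrite /= cy.
  + apply: leq_trans (leq_add (subset_leq_card (mismatch_flip _ _ _)) (leqnn _)) _.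
    by rewrite cardsU1 -addnA -add1n leq_add ?leq_b1.
- case/orP: ring => /eqP ring.
  + exists lo, (maxn hi c.+1), c.+1; split.
    * by apply/and3P; split; lia.
    * by rewrite ring -addn1 -modnDml cy.
    * by apply: subset_trans sub (cover_sub _ _); rewrite ?leq_maxl.
    * by apply: leq_trans (leq_add (leqnn _) (tour_extend_right p_in c_in)) _; lia.
  + have c_gt0 : 0 < c by lia.
    exists (minn lo c.-1), hi, c.-1; split.
    * by apply/and3P; split; lia.
    * have : c.-1 + 1 = y' + 1 %[mod r] by rewrite addn1 prednK // cy ring.
      by move/eqP; rewrite eqn_modDr (modn_small (ltn_ord y')) => /eqP.
    * by apply: subset_trans sub (cover_sub _ _); rewrite ?geq_minl.
    * by apply: leq_trans (leq_add (leqnn _) (tour_extend_left p_in c_in)) _; lia.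
Qed.

Lemma walk_to_complement k y :
  walkb Q k ([ffun=> false], layer 0) ([ffun=> true], y) -> exists lo hi c,
  [/\ lo <= r * k <= hi, lo <= c <= hi, c %% r = y, n <= (hi - lo).+1 * d
    & n + tour (r * k) lo hi c <= k].
Proof.
have -> : layer 0 = layer (r * k) by apply: val_inj; rewrite /= mod0n mulnC modnMl.
move=> /(walk_tour_invariant (leq_pmull k r_gt0)) [lo [hi [c [/and3P [_ p_in c_in] cy sub len]]]].
have mm : mismatch [ffun=> false] [ffun=> true] = [set: 'I_n].
  by apply/setP => j; rewrite !inE !ffunE.
rewrite /= mm cardsT card_ord in sub len; exists lo, hi, c; split => //.
apply: leq_trans (cover_card lo hi).
by have := subset_leq_card sub; rewrite cardsT card_ord.
Qed.

Lemma walk_to_complement_half_layer k :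
  walkb Q k ([ffun=> false], layer 0) ([ffun=> true], layer (r %/ 2)) -> n + r %/ 2 <= k.
Proof.
move=> /walk_to_complement [lo [hi [c [p_in c_in cy _ len]]]].
apply: leq_trans len; rewrite leq_add2l tour_geq_half_residue // cy /= modn_small //.
by rewrite ltn_Pdiv.
Qed.

Hypothesis d_gt0 : 0 < d.

Lemma walk_to_complement_same_layer k :
  walkb Q k ([ffun=> false], layer 0) ([ffun=> true], layer 0) ->
  n + minn (2 * ceil_div n d - 2) r <= k.
Proof.
move=> /walk_to_complement [lo [hi [c [p_in c_in cy cover_n len]]]].
apply: leq_trans len; rewrite leq_add2l tour_geq_same_residue //.
  by rewrite cy /= mod0n.
by rewrite ceil_div_leq.
Qed.

Lemma walk_to_complement_half_layer_full_turn k : d * r = n -> 4 <= r ->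
  walkb Q k ([ffun=> false], layer 0) ([ffun=> true], layer (r %/ 2)) ->
  n + (3 * r) %/ 2 - 2 <= k.
Proof.
move=> dr_n r_ge4 /walk_to_complement [lo [hi [c [p_in c_in cy cover_n len]]]].
have r_le : r <= (hi - lo).+1.
  by move: cover_n; rewrite -dr_n mulnC leq_mul2r (gtn_eqF d_gt0).
have c_half : c %% r = r %/ 2 by rewrite cy /= modn_small // ltn_Pdiv.
by have := tour_geq_half_residue_full_turn r_ge4 p_in c_in c_half r_le; lia.
Qed.

Hypothesis dr_mod : (d * r) %% n = 0.

Lemma window_layer i w : (i + d * layer w) %% n = (i + d * w) %% n.
Proof.
have dr : d * r = (d * r %/ n) * n by rewrite {1}(divn_eq (d * r) n) dr_mod addn0.
have -> : i + d * w = (w %/ r * (d * r %/ n)) * n + (i + d * layer w).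
  rewrite /= {1}(divn_eq w r) mulnDr -mulnA -dr.
  by rewrite [d * (w %/ r * r)]mulnC -mulnA [r * d]mulnC; lia.
by rewrite modnMDl.
Qed.

Lemma cover_full z s : n <= s.+1 * d -> cover z (z + s) = setT.
Proof.
move=> big; apply/setP => j; rewrite in_setT; apply/coverP.
set e := (j + (n - d * z %% n)) %% n.
have e_lt : e %/ d < s.+1 by rewrite ltn_divLR //; apply: leq_trans big; rewrite ltn_pmod.
exists (z + e %/ d); first by rewrite leq_addr leq_add2l -ltnS.
rewrite inE; apply/existsP; exists (Ordinal (ltn_pmod e d_gt0)); rewrite window_layer /=.
have -> : e %% d + d * (z + e %/ d) = d * z + e.
  by rewrite {3}(divn_eq e d) mulnDr [d * (e %/ d)]mulnC; lia.
rewrite -modnDml /e modnDmr.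
have dz_lt : d * z %% n < n by rewrite ltn_pmod.
have -> : d * z %% n + (j + (n - d * z %% n)) = j + n by lia.
by rewrite modnDr modn_small.
Qed.

Lemma reach_sweep s z (a b : word) : n <= s.+1 * d ->
  reach Q (s + n) (a, layer z) (b, layer (z + s)).
Proof.
move=> big; apply: reach_leq (reach_sweep_cover _); first by rewrite leq_add2l mismatch_card.
by rewrite cover_full // subsetT.
Qed.

Lemma reach_down_sweep_up u s w (a b : word) : n <= s.+1 * d ->
  reach Q (u + s + n) (a, layer (w + u)) (b, layer (w + s)).
Proof.
move=> big; rewrite -addnA.
exact: reach_cat (reach_sym Qadj_sym (reach_ring u w a)) (reach_sweep w a b big).
Qed.

Lemma reach_up_sweep_down u s v w (a b : word) : v + s = w + u -> n <= s.+1 * d ->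
  reach Q (u + s + n) (a, layer w) (b, layer v).
Proof.
move=> vw big; rewrite -addnA; apply: reach_cat (reach_ring u w a) _.
by rewrite -vw; apply: reach_sym Qadj_sym (reach_sweep v b a big).
Qed.

Lemma reach_Q_single_turn : d * r = n -> 3 <= r ->
  forall u v, reach Q (if r == 3 then n + r else n + (3 * r) %/ 2 - 2) u v.
Proof.
move=> dr_n r_ge3; set D := if _ then _ else _.
have turn s : r <= s.+1 -> n <= s.+1 * d.
  by move=> r_s; rewrite -dr_n mulnC leq_mul2r r_s orbT.
apply: reach_of_short_offsets => [x a b | w f a b f_gt0 f_half].
  have := reach_sweep x a b (turn r (leqnSn r)); rewrite layerDr layer_ord.
  by apply: reach_leq; rewrite /D; case: eqP; lia.
(* Step [f - 1] layers towards the target, then sweep a whole turn back onto it. *)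
rewrite -layerDr; apply: reach_leq (reach_up_sweep_down (u := f.-1) (s := r.-1) a b _ (turn _ _)).
- by rewrite /D; case: eqP; lia.
all: lia.
Qed.

Lemma reach_Q_multi_turn : 2 * n <= d * r ->
  forall u v, reach Q (n + maxn (r %/ 2) (2 * ceil_div n d - 2)) u v.
Proof.
move=> dense; set m := ceil_div n d; set D := n + _.
have m_r : 2 * m <= r.+1 by apply: ceil_div_half.
have m_gt0 : 0 < m by rewrite ltnNge ceil_div_leq // mul0n -ltnNge.
have turn s : m <= s.+1 -> n <= s.+1 * d by move=> m_s; rewrite -ceil_div_leq.
clearbody m.
have route w f (a b : word) : f <= r %/ 2 -> reach Q D (a, layer w) (b, layer (w + f)).
  move=> f_half; case: (leqP m.-1 f) => [m_f | f_m].
    by apply: reach_leq (reach_sweep w a b (turn f _)); rewrite /D; lia.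
  (* Back off first, so that the sweep spans [m] layers. *)
  set t := m.-1 - f.
  have := reach_down_sweep_up t (w + r - t) a b (turn m.-1 (leqSpred m)).
  have -> : w + r - t + t = w + r by rewrite /t; lia.
  have -> : w + r - t + m.-1 = w + f + r by rewrite /t; lia.
  by rewrite !layerDr; apply: reach_leq; rewrite /D; lia.
apply: reach_of_short_offsets => [x a b | w f a b _]; last exact: route.
by have := route x 0 a b (leq0n _); rewrite addn0 layer_ord.
Qed.

End RecursiveCube.

Lemma card_QV_gt n r : 2 <= n -> 2 <= r -> n + 2 * r < #|QV n r|.
Proof.
move=> n_ge2 r_ge2; rewrite card_prod card_ffun !card_ord card_bool.
have n_lt : n < 2 ^ n by apply: ltn_expl.
have four_le : 4 <= 2 ^ n by rewrite (_ : 4 = 2 ^ 2) // leq_exp2l.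
have : 4 * r.-1 <= 2 ^ n * r.-1 by rewrite leq_mul2r four_le orbT.
have -> : 2 ^ n * r = 2 ^ n * r.-1 + 2 ^ n by rewrite -mulnSr prednK // ltnW.
lia.
Qed.

Theorem mainTheorem9 (n d r : nat) :
  2 <= n -> 1 <= d -> 3 <= r -> d <= n -> (d * r) %% n = 0 ->
  (d * r = n ->
     diam (Qadj n d r) = (if r == 3 then n + r else n + (3 * r) %/ 2 - 2)) /\
  (2 * n <= d * r ->
     diam (Qadj n d r) = n + maxn (r %/ 2) (2 * ceil_div n d - 2)).
Proof.
move=> n_ge2 d_gt0 r_ge3 _ dr_mod.
have r_gt0 : 0 < r by apply: leq_trans r_ge3.
have n_gt0 : 0 < n by apply: ltnW.
have QV_big := card_QV_gt n_ge2 (ltnW r_ge3).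
pose zero : QV n r := ([ffun=> false], layer r_gt0 0).
pose one y : QV n r := ([ffun=> true], layer r_gt0 y).
have to_same k := @walk_to_complement_same_layer n d r r_gt0 n_gt0 d_gt0 k.
split=> [dr_n | dense]; apply/eqP; rewrite eqn_leq; apply/andP; split.
- have ub := reach_Q_single_turn r_gt0 n_gt0 d_gt0 dr_mod dr_n r_ge3.
  by apply: diam_leq ub; case: eqP => _; lia.
- case: eqP => [r3 | /eqP r_ne3].
    apply: (diam_geq (u := zero) (v := one 0)) => [|k /to_same]; first lia.
    by rewrite -dr_n ceil_divMl // r3.
  have r_ge4 : 4 <= r by lia.
  apply: (diam_geq (u := zero) (v := one (r %/ 2))) => [|k]; first lia.
  by move/(walk_to_complement_half_layer_full_turn n_gt0 d_gt0 dr_n r_ge4); lia.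
- have m_r := ceil_div_half d_gt0 dense.
  by apply: diam_leq (reach_Q_multi_turn r_gt0 n_gt0 d_gt0 dr_mod dense); lia.
- have m_r := ceil_div_half d_gt0 dense.
  rewrite addn_maxr geq_max; apply/andP; split.
    apply: (diam_geq (u := zero) (v := one (r %/ 2))); first lia.
    exact: walk_to_complement_half_layer.
  apply: (diam_geq (u := zero) (v := one 0)) => [|k /to_same]; lia.
Qed.
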